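(* Let $d$ be a distance function on the edges of the complete graph $K_n$ and let $H$ be a Hamiltonian cycle of $K_n$. Then, with probability $\Omega(1)$ (as $n\to\infty$), one application of the edge-based random solution generation with the matrix $\Pi^H$ outputs a Hamiltonian cycle whose cost is not larger than the cost of $H$.
   Context: The cost of a Hamiltonian cycle is the sum of $d$ over its edges. For a Hamiltonian cycle $H$, $\Pi^H=(\pi_{i,j})$ is the symmetric $n\times n$ matrix with $\pi_{i,i}=0$, $\pi_{i,j}=1-\frac1n$ if $\{i,j\}\in H$ and $\pi_{i,j}=\frac{1}{n(n-2)}$ otherwise. Edge-based generation from $\Pi$: start with $B=\emptyset$ and repeatedly add to $B$ an edge $\{i,j\}\notin B$ chosen among the admissible edges with probability proportional to $\pi_{i,j}+\pi_{j,i}$, until $B$ is a Hamiltonian cycle; an edge is admissible if adding it to $B$ creates no vertex of degree $\ge3$ and no cycle with fewer than $n$ edges. *)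

From HB Require Import structures.
From mathcomp Require Import all_boot all_order all_algebra.
Set Implicit Arguments. Unset Strict Implicit. Unset Printing Implicit Defensive.
Import Order.TTheory GRing.Theory Num.Theory.
Local Open Scope ring_scope.

(* Edges of the complete graph K_n on vertex set 'I_n: 2-element vertex sets. *)
Definition edge (n : nat) := {e : {set 'I_n} | #|e| == 2%N}.
HB.instance Definition _ n := Finite.on (edge n).

Section Graph.
Variable n : nat.
Implicit Types (B C : {set edge n}) (u v : 'I_n).

Definition deg B v : nat := #|[set e in B | v \in val e]|.

Definition adj B : rel 'I_n :=
  fun u v => [exists e in B, (u != v) && (u \in val e) && (v \in val e)].

Definition is_cycle C : bool :=
  [&& C != set0,
      [forall v, (deg C v == 0%N) || (deg C v == 2%N)] &
      [forall u, forall v, ((deg C u != 0%N) && (deg C v != 0%N)) ==> connect (adj C) u v]].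

Definition is_hamcycle C : bool := is_cycle C && [forall v, deg C v == 2%N].

Definition admissible B (e : edge n) : bool :=
  [&& e \notin B,
      [forall v, deg (e |: B) v <= 2]%N &
      [forall C in powerset (e |: B), is_cycle C ==> (n <= #|C|)%N]].

End Graph.

Section Process.
Variables (R : realFieldType) (n : nat).

Definition cost (d : edge n -> R) (B : {set edge n}) : R := \sum_(e in B) d e.

(* the matrix Pi^H, viewed on edges (it is symmetric, pi_{i,j} = pi_{j,i}) *)
Definition piH (H : {set edge n}) (e : edge n) : R :=
  if e \in H then 1 - 1 / n%:R else 1 / (n%:R * (n - 2)%:R).

(* selection weight pi_{i,j} + pi_{j,i} of edge {i,j} *)
Definition weight (H : {set edge n}) (e : edge n) : R := piH H e + piH H e.

(* Probability that the edge-based generation with matrix Pi^H, started from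
   the current edge set B and with at most [fuel] further steps, terminates
   with a Hamiltonian cycle whose cost is <= cost of H. *)
Fixpoint succ_prob (d : edge n -> R) (H : {set edge n}) (fuel : nat)
    (B : {set edge n}) : R :=
  if is_hamcycle B then (if cost d B <= cost d H then 1 else 0) else
  match fuel with
  | 0%N => 0
  | f.+1 =>
    let A := [set e | admissible B e] in
    \sum_(e in A) (weight H e / \sum_(e' in A) weight H e') * succ_prob d H f (e |: B)
  end.

(* probability of the event for one run started from B = emptyset;
   a run adds exactly n edges, so fuel n suffices. *)
Definition gen_success_prob (d : edge n -> R) (H : {set edge n}) : R :=
  succ_prob d H n set0.

End Process.

From HB Require Import structures.
From mathcomp Require Import all_boot all_order all_algebra.
From mathcomp Require Import zify ring lra.
Set Implicit Arguments. Unset Strict Implicit. Unset Printing Implicit Defensive.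
Import Order.TTheory GRing.Theory Num.Theory.

(* Follow the run while it only picks edges of H.  If the current edge set B is
   contained in H and m edges of H are missing, every missing edge of H is
   admissible (a cycle inside a Hamiltonian cycle is the whole cycle), whereas an
   admissible edge outside H joins two vertices of B-degree < 2; there are at most
   2m such vertices, hence at most nm such edges.  An edge of H weighs about n^2
   times more than any other edge, so the next edge is in H with probability at
   least 1 - eps n.  After n such steps the output is H itself, so the success
   probability is at least (1 - eps n)^n, which is >= 1/16 for n >= 11. *)

Section Graph.
Variable n : nat.
Implicit Types (B C : {set edge n}) (u v : 'I_n) (e : edge n).

Lemma card_edge e : #|val e| = 2.
Proof. by case: e => X /= /eqP. Qed.

Lemma edge_vertex e : exists v, v \in val e.
Proof. by apply/card_gt0P; rewrite card_edge. Qed.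

Lemma deg_gt0 B v e : e \in B -> v \in val e -> (0 < deg B v)%N.
Proof. by move=> eB ve; apply/card_gt0P; exists e; rewrite inE eB ve. Qed.

Lemma subset_incident B C v : B \subset C ->
  [set f in B | v \in val f] \subset [set f in C | v \in val f].
Proof.
by move=> sBC; apply/subsetP => f; rewrite !inE => /andP[/(subsetP sBC) -> ->].
Qed.

Lemma subset_deg B C v : B \subset C -> (deg B v <= deg C v)%N.
Proof. by move=> sBC; apply/subset_leq_card/subset_incident. Qed.

Lemma deg_eq_mem B C v e : B \subset C -> deg B v = deg C v ->
  e \in C -> v \in val e -> e \in B.
Proof.
move=> sBC dBC eC ve.
have /eqP EBC : [set f in B | v \in val f] == [set f in C | v \in val f].
  by rewrite eqEcard -!/(deg _ v) dBC leqnn subset_incident.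
have : e \in [set f in C | v \in val f] by rewrite inE eC ve.
by rewrite -EBC inE => /andP[].
Qed.

Lemma sum_deg B : (\sum_v deg B v = #|B| * 2)%N.
Proof.
transitivity (\sum_v \sum_(e in B) (v \in val e : nat))%N.
  apply: eq_bigr => v _; rewrite /deg -sum1_card big_mkcond [RHS]big_mkcond.
  by apply: eq_bigr => e _; rewrite !inE; case: (e \in B); case: (v \in val e).
rewrite exchange_big -sum_nat_const; apply: eq_bigr => e _.
by rewrite -[RHS](card_edge e) -sum1_card [RHS]big_mkcond.
Qed.

Lemma adj_sym B : symmetric (adj B).
Proof.
suff adjC B' u v : adj B' u v -> adj B' v u by move=> u v; apply/idP/idP; apply: adjC.
case/existsP=> e /andP[eB /andP[/andP[uv ue] ve]].
by apply/existsP; exists e; rewrite eB eq_sym uv ue ve.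
Qed.

Lemma admissible_notin B e : admissible B e -> e \notin B.
Proof. by case/and3P. Qed.

Lemma admissible_deg_lt2 B e v : admissible B e -> v \in val e -> (deg B v < 2)%N.
Proof.
case/and3P=> eB /forallP /(_ v) deg_eB _ ve.
suff <- : deg (e |: B) v = (deg B v).+1 by [].
rewrite /deg.
have -> : [set f in e |: B | v \in val f] = e |: [set f in B | v \in val f].
  by apply/setP => f; rewrite !inE; case: eqP => [-> | _]; rewrite ?ve.
by rewrite cardsU1 inE (negbTE eB).
Qed.

Section Hamiltonian.
Variable H : {set edge n}.
Hypothesis hH : is_hamcycle H.

Lemma hamcycle_deg v : deg H v = 2.
Proof. by case/andP: hH => _ /forallP /(_ v) /eqP. Qed.

Lemma card_hamcycle : #|H| = n.
Proof.
apply/eqP; rewrite -(eqn_pmul2r (isT : (0 < 2)%N)) -sum_deg.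
by rewrite (eq_bigr (fun=> 2%N)) ?sum_nat_const ?card_ord // => v _; rewrite hamcycle_deg.
Qed.

Lemma hamcycle_connect u v : connect (adj H) u v.
Proof.
case/andP: hH => /and3P[_ _ /forallP /(_ u) /forallP /(_ v) /implyP conn] _.
by apply: conn; rewrite !hamcycle_deg.
Qed.

(* A subcycle C of H has degree 2 wherever it touches a vertex, and that property
   propagates along the edges of H, which is connected. *)
Lemma subcycle_hamcycle C : C \subset H -> is_cycle C -> C = H.
Proof.
move=> sCH /and3P[/set0Pn[e0 e0C] /forallP degC _].
have degC2 v : (0 < deg C v)%N -> deg C v = 2.
  by case/orP: (degC v) => /eqP ->.
have closedC : closed (adj H) [pred v | deg C v == 2].
  suff adj2 u v : adj H u v -> deg C u = 2 -> deg C v = 2.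
    by move=> u v uv; apply/eqP/eqP; apply: adj2; rewrite // adj_sym.
  case/existsP=> e /andP[eH /andP[/andP[_ ue] ve]] du.
  apply/degC2/(deg_gt0 _ ve).
  by apply: deg_eq_mem sCH _ eH ue; rewrite du hamcycle_deg.
have [v0 v0e0] := edge_vertex e0.
have degC_all v : deg C v = 2.
  have := closed_connect closedC (hamcycle_connect v0 v).
  by rewrite !inE (degC2 _ (deg_gt0 e0C v0e0)) eqxx => /esym/eqP.
apply/eqP; rewrite eqEsubset sCH; apply/subsetP => e eH.
have [v ve] := edge_vertex e.
by apply: deg_eq_mem sCH _ eH ve; rewrite degC_all hamcycle_deg.
Qed.

Lemma proper_hamcycle B : B \proper H -> ~~ is_hamcycle B.
Proof.
case/properP=> sBH [e eH eB]; have [v ve] := edge_vertex e.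
apply: contra eB => /andP[_ /forallP /(_ v) /eqP degB].
by apply: deg_eq_mem sBH _ eH ve; rewrite degB hamcycle_deg.
Qed.

Lemma admissible_setIH B : B \subset H -> [set e | admissible B e] :&: H = H :\: B.
Proof.
move=> sBH; apply/setP => e; rewrite !inE.
case eH: (e \in H); rewrite ?andbT ?andbF //; apply/idP/idP => [/admissible_notin // | eB].
have seBH : e |: B \subset H by rewrite subUset sub1set eH sBH.
rewrite /admissible eB /=; apply/andP; split.
  by apply/forallP => v; rewrite -(hamcycle_deg v) subset_deg.
apply/forall_inP => C; rewrite inE => sC; apply/implyP => cycleC.
by rewrite (subcycle_hamcycle (subset_trans sC seBH) cycleC) card_hamcycle.
Qed.

Lemma card_deg_lt2 B : B \subset H -> (#|[set v | deg B v < 2]| <= #|H :\: B| * 2)%N.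
Proof.
move=> sBH; have degB2 v : (deg B v <= 2)%N by rewrite -(hamcycle_deg v) subset_deg.
apply: (@leq_trans (\sum_v (2 - deg B v))%N).
  rewrite -sum1_card big_mkcond /=; apply: leq_sum => v _.
  by rewrite inE; case: ltnP => // ?; rewrite subn_gt0.
rewrite sumnB // sum_deg sum_nat_const card_ord.
by rewrite cardsD (setIidPr sBH) card_hamcycle mulnBl.
Qed.

Lemma card_admissible_notin B : B \subset H ->
  (#|[set e | admissible B e] :\: H| <= n * #|H :\: B|)%N.
Proof.
move=> sBH; set S := [set v | deg B v < 2]%N.
have S_le_n : (#|S| <= n)%N by rewrite -[X in (_ <= X)%N]card_ord max_card.
have S_le_2m : (#|S| <= #|H :\: B| * 2)%N := card_deg_lt2 sBH.
apply: (@leq_trans 'C(#|S|, 2)).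
  rewrite -cards_draws -(card_imset _ val_inj); apply: subset_leq_card.
  apply/subsetP => X /imsetP[e]; rewrite !inE => /andP[_ ae] ->.
  rewrite card_edge eqxx andbT; apply/subsetP => v ve.
  by rewrite inE (admissible_deg_lt2 ae ve).
rewrite bin2 leq_half_double; nia.
Qed.

End Hamiltonian.
End Graph.

Local Open Scope ring_scope.

Section Inequalities.
Variable R : realFieldType.

Lemma le_ratio (a b x : R) : 0 < a -> 0 <= b -> 0 <= x -> b <= x * a ->
  1 - x <= a / (a + b).
Proof. by move=> a_gt0 b_ge0 x_ge0 b_le; rewrite ler_pdivlMr; nra. Qed.

Lemma bernoulli_ineq (x : R) k : 0 <= x <= 1 -> 1 - k%:R * x <= (1 - x) ^+ k.
Proof.
case/andP=> x_ge0 x_le1; elim: k => [|k IHk]; first by rewrite mul0r subr0 expr0.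
have k_ge0 : 0 <= k%:R :> R by [].
have : (1 - k%:R * x) * (1 - x) <= (1 - x) ^+ k * (1 - x) by rewrite ler_wpM2r ?subr_ge0.
by rewrite exprSr -natr1; nra.
Qed.

(* Bernoulli's inequality applied to each half of the exponent. *)
Lemma sixteenth_le_expr (x : R) k : 0 <= x <= 1 -> k.+1%:R * x <= 3 / 2 ->
  1 / 16 <= (1 - x) ^+ k.
Proof.
move=> x01 kx; have x_ge0 : 0 <= x by case/andP: x01.
have quarter_le i : (i.*2 <= k.+1)%N -> 1 / 4 <= (1 - x) ^+ i.
  move=> i2k; have : i%:R * 2 <= k.+1%:R :> R by rewrite -natrM ler_nat muln2.
  have i_ge0 : 0 <= i%:R :> R by [].
  by move=> i2k'; apply: le_trans (bernoulli_ineq i x01); nra.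
have kE := odd_double_half k.
have k_halves : k = (k./2 + (k - k./2))%N by lia.
have le1 : 1 / 4 <= (1 - x) ^+ k./2 by apply: quarter_le; lia.
have le2 : 1 / 4 <= (1 - x) ^+ (k - k./2) by apply: quarter_le; lia.
rewrite k_halves exprD; apply: le_trans (ler_pM _ _ le1 le2); lra.
Qed.

End Inequalities.

(* [eps n * w_H = n * w_O] for the selection weights [w_H] of an edge of H and
   [w_O] of any other edge; [1 - eps n] then bounds from below the probability
   that a step of the generation picks an edge of H. *)
Definition eps (R : realFieldType) (n : nat) : R := n%:R / ((n%:R - 1) * (n%:R - 2)).

(* [(n + 1) n <= 3/2 (n - 1) (n - 2)] amounts to [n^2 - 11 n + 6 >= 0]. *)
Lemma succ_mul_eps_le (R : realFieldType) n : (10 < n)%N -> n.+1%:R * eps R n <= 3 / 2.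
Proof.
move=> n_gt10; have n_ge11 : 11 <= n%:R :> R by rewrite (ler_nat R 11).
have den_gt0 : 0 < (n%:R - 1) * (n%:R - 2) :> R by nra.
by rewrite /eps mulrA ler_pdivrMr // -natr1; nra.
Qed.

Section Weights.
Variables (R : realFieldType) (n : nat) (H : {set edge n}).

Lemma weight_ge0 e : 0 <= weight R H e.
Proof.
have inv_le1 : (n%:R : R)^-1 <= 1.
  by case: n => [|k]; rewrite ?invr0 // invf_le1 // ler1n.
rewrite /weight /piH !mul1r; case: ifP => _; first lra.
by rewrite addr_ge0 // invr_ge0 mulr_ge0.
Qed.

Lemma succ_prob_ge0 (d : edge n -> R) f B : 0 <= succ_prob d H f B.
Proof.
elim: f B => [|f IHf] B /=; first by case: ifP => //; case: ifP.
case: ifP => _; first by case: ifP.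
rewrite sumr_ge0 // => e _; rewrite mulr_ge0 // divr_ge0 ?weight_ge0 //.
by rewrite sumr_ge0 // => *; rewrite weight_ge0.
Qed.

End Weights.

Section Generation.
Variables (R : realFieldType) (n : nat) (d : edge n -> R) (H : {set edge n}).
Hypotheses (n_gt3 : (3 < n)%N) (hH : is_hamcycle H).

Let wH : R := (1 - 1 / n%:R) + (1 - 1 / n%:R).
Let wO : R := 1 / (n%:R * (n - 2)%:R) + 1 / (n%:R * (n - 2)%:R).
Let n_ge4 : 4 <= n%:R :> R. Proof. by rewrite (ler_nat R 4). Qed.

Lemma eps_ge0 : 0 <= eps R n.
Proof. by have n4 := n_ge4; rewrite divr_ge0 //; nra. Qed.

Lemma eps_le1 : eps R n <= 1.
Proof. by have n4 := n_ge4; rewrite ler_pdivrMr; nra. Qed.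

Lemma weight_in e : e \in H -> weight R H e = wH.
Proof. by move=> eH; rewrite /weight /piH eH. Qed.

Lemma weight_notin e : e \notin H -> weight R H e = wO.
Proof. by move=> eH; rewrite /weight /piH (negbTE eH). Qed.

Lemma wH_gt0 : 0 < wH.
Proof.
have n4 := n_ge4; have : 1 / n%:R < 1 :> R by rewrite ltr_pdivrMr; lra.
by rewrite /wH; lra.
Qed.

Lemma wO_ge0 : 0 <= wO.
Proof. by rewrite /wO addr_ge0 // divr_ge0 // mulr_ge0. Qed.

Lemma eps_mul_wH : eps R n * wH = n%:R * wO.
Proof.
have n4 := n_ge4; rewrite /eps /wH /wO natrB; last exact: ltnW (ltnW n_gt3).
by field; do ?[apply/andP; split]; apply/eqP; lra.
Qed.

Lemma weight_share (B : {set edge n}) : B \proper H ->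
  1 - eps R n <= (\sum_(e in H :\: B) weight R H e) /
                 \sum_(e in [set e | admissible B e]) weight R H e.
Proof.
move=> pBH; have sBH := proper_sub pBH.
have m_gt0 : (0 < #|H :\: B|)%N.
  by case/properP: pBH => _ [e eH eB]; apply/card_gt0P; exists e; rewrite inE eH eB.
rewrite [X in _ / X](big_setID H) /= admissible_setIH //.
rewrite (eq_bigr (fun=> wH)) => [|e /setDP[eH _]]; last exact: weight_in.
rewrite [X in _ / (_ + X)](eq_bigr (fun=> wO)) => [|e /setDP[_ eH]]; last exact: weight_notin.
rewrite !sumr_const; apply: le_ratio; rewrite ?pmulrn_lgt0 ?mulrn_wge0 ?wH_gt0 ?wO_ge0 //.
  exact: eps_ge0.
rewrite mulrnAr eps_mul_wH mulr_natl -mulrnA.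
exact/ler_wpMn2l/card_admissible_notin/sBH/hH/wO_ge0.
Qed.

Lemma succ_prob_subset m (B : {set edge n}) : B \subset H -> #|H :\: B| = m ->
  (1 - eps R n) ^+ m <= succ_prob d H m B.
Proof.
elim: m B => [|m IHm] B sBH mB.
  suff -> : B = H by rewrite /= hH lexx expr0.
  by apply/eqP; rewrite eqEsubset sBH -setD_eq0 -cards_eq0 mB.
have pBH : B \proper H.
  by rewrite properEneq sBH andbT; apply/eqP => EBH; move: mB; rewrite EBH setDv cards0.
rewrite /= (negbTE (proper_hamcycle hH pBH)).
set W := \sum_(e in _) weight R H e.
have W_ge0 : 0 <= W by rewrite sumr_ge0 // => e _; rewrite weight_ge0.
rewrite (big_setID H) /= admissible_setIH // -[X in X <= _]addr0.
apply: lerD; last first.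
  by rewrite sumr_ge0 // => e _; rewrite mulr_ge0 ?succ_prob_ge0 ?divr_ge0 ?weight_ge0 ?W_ge0.
apply: le_trans (_ : \sum_(e in H :\: B) weight R H e / W * (1 - eps R n) ^+ m <= _).
  rewrite -!mulr_suml exprS; apply: ler_wpM2r (weight_share pBH).
  by rewrite exprn_ge0 // subr_ge0 eps_le1.
apply: ler_sum => e /setDP[eH eB]; apply: ler_wpM2l.
  by rewrite divr_ge0 ?weight_ge0 ?W_ge0.
apply: IHm; first by rewrite subUset sub1set eH sBH.
by move: (cardsD1 e (H :\: B)); rewrite mB inE eH eB add1n setDDl setUC => -[].
Qed.

Lemma gen_success_prob_ge : (1 - eps R n) ^+ n <= gen_success_prob d H.
Proof. by apply: succ_prob_subset; rewrite ?sub0set // setD0 card_hamcycle. Qed.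

End Generation.

Theorem claim5 (R : realFieldType) :
  exists (c : R) (N : nat), 0 < c /\
    forall (n : nat), (N <= n)%N ->
    forall (d : edge n -> R) (H : {set edge n}),
      is_hamcycle H -> c <= gen_success_prob d H.
Proof.
exists (1 / 16), 11%N; split => [|n n_ge11 d H hH]; first by rewrite divr_gt0.
have n_gt3 : (3 < n)%N by apply: leq_trans n_ge11.
apply: le_trans (gen_success_prob_ge d n_gt3 hH).
by rewrite sixteenth_le_expr ?eps_ge0 ?eps_le1 ?succ_mul_eps_le.
Qed.
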